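(* Let $\{A_i\}_{i\in I}$ be a family of groups. Then $\mathrm{TorLen}( *_{i\in I}A_i)=\sup\{\mathrm{TorLen}(A_i)\}_{i\in I}$.
   Context: For a group $G$, define $\mathrm{Tor}_0(G)=\{e\}$ and inductively $\mathrm{Tor}_{i+1}(G)$ to be the normal closure in $G$ of $\{g\in G : g\,\mathrm{Tor}_i(G)\text{ has finite order in } G/\mathrm{Tor}_i(G)\}$; set $\mathrm{Tor}_\infty(G)=\bigcup_{i}\mathrm{Tor}_i(G)$. The torsion length $\mathrm{TorLen}(G)$ is the smallest $n\ge 0$ with $\mathrm{Tor}_n(G)=\mathrm{Tor}_\infty(G)$, and $\infty$ if no such $n$ exists; the supremum is taken in $\mathbb{N}\cup\{\infty\}$. *)

From Stdlib Require Import Arith ClassicalEpsilon.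



Record group : Type := Group {
  carrier :> Type;
  gmul : carrier -> carrier -> carrier;
  gone : carrier;
  ginv : carrier -> carrier;
  gmul_assoc : forall x y z, gmul x (gmul y z) = gmul (gmul x y) z;
  gmul_1l : forall x, gmul gone x = x;
  gmul_Vl : forall x, gmul (ginv x) x = gone
}.

Arguments gmul {g} _ _.
Arguments gone {g}.
Arguments ginv {g} _.

Fixpoint gpow (G : group) (g : G) (n : nat) : G :=
  match n with
  | 0 => gone
  | S k => gmul g (gpow G g k)
  end.

Record hom (G H : group) : Type := Hom {
  hom_fun :> G -> H;
  hom_mul : forall x y, hom_fun (gmul x y) = gmul (hom_fun x) (hom_fun y)
}.

Definition is_free_product (I : Type) (A : I -> group) (G : group)
  (iota : forall i, hom (A i) G) : Prop :=
  forall (H : group) (f : forall i, hom (A i) H),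
    exists phi : hom G H,
      (forall i (x : A i), phi (iota i x) = f i x) /\
      (forall psi : hom G H, (forall i (x : A i), psi (iota i x) = f i x) ->
         forall g, psi g = phi g).

Definition normal_subgroup (G : group) (N : G -> Prop) : Prop :=
  N gone /\ (forall x y, N x -> N y -> N (gmul x y)) /\
  (forall x, N x -> N (ginv x)) /\
  (forall x g, N x -> N (gmul (ginv g) (gmul x g))).

Definition normal_closure (G : group) (S : G -> Prop) : G -> Prop :=
  fun x => forall N : G -> Prop, normal_subgroup G N ->
             (forall s, S s -> N s) -> N x.

(** Tor_i(G).  For a normal subgroup N, the coset gN has finite order in G/N
    iff g^n \in N for some n >= 1. *)
Fixpoint Tor (G : group) (n : nat) : G -> Prop :=
  match n with
  | 0 => fun x => x = gone
  | S k => normal_closure G (fun g => exists m, 0 < m /\ Tor G k (gpow G g m))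
  end.

Definition Tor_inf (G : group) : G -> Prop := fun x => exists n, Tor G n x.

(** N \cup {oo}: [Some n] = n, [None] = oo. *)
Definition natinf := option nat.

Definition le_natinf (a b : natinf) : Prop :=
  match a, b with
  | _, None => True
  | None, Some _ => False
  | Some m, Some n => m <= n
  end.

Definition Tor_stable (G : group) (n : nat) : Prop :=
  forall x, Tor G n x <-> Tor_inf G x.

Definition TorLen_spec (G : group) (l : natinf) : Prop :=
  match l with
  | Some n => Tor_stable G n /\ forall m, Tor_stable G m -> n <= m
  | None => forall n, ~ Tor_stable G n
  end.

(** TorLen(G): the smallest n with Tor_n = Tor_oo, or oo if there is none.
    (Such a value always exists; it is selected by classical choice.) *)
Definition TorLen (G : group) : natinf :=
  epsilon (inhabits (None : natinf)) (TorLen_spec G).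

Definition is_sup_natinf (I : Type) (s : I -> natinf) (l : natinf) : Prop :=
  (forall i, le_natinf (s i) l) /\
  (forall u, (forall i, le_natinf (s i) u) -> le_natinf l u).

(* Everything rests on one fact about a free product G = *_i A_i with
   canonical maps iota_i, proved by the normal-form method: given normal
   subgroups K_i of the A_i, let N be the normal closure of the iota_i(K_i).
   If g^m lies in N for some m > 0, then g lies in the normal closure of the
   elements iota_i(a) such that a^k lies in K_i for some k > 0
   ([root_closure_of_power]).  In words: G/N is the free product of the
   A_i/K_i, and a torsion element of a free product is conjugate into a
   factor.  The quotient is never built; instead G acts (via the universal
   property) on reduced words over the A_i/K_i, written with fixed coset
   representatives, and the normal form of g is the image of the empty word.
   By induction on the length of that normal form, g is either conjugate to
   an element with shorter normal form, or a single letter, or cyclically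
   reduced, and in the last case no power of g acts trivially.

   Applying this with K_i = Tor_n(A_i) shows by induction that Tor_n(G) lies
   in the normal closure of the iota_i(Tor_n(A_i)), hence that G is
   torsion-stable at level n as soon as every A_i is ([stable_free_product]).
   Conversely every A_i is a retract of G, so stability of G passes to the
   factors ([stable_factor]).  The theorem follows because TorLen(G) <= n
   holds exactly when G is torsion-stable at level n. *)
From Stdlib Require Import Arith Lia List Wf_nat ClassicalEpsilon Classical
  FunctionalExtensionality PropExtensionality ProofIrrelevance Eqdep.
Import ListNotations.

Notation "x ** y" := (gmul x y) (at level 40, left associativity).

Section GroupFacts.
Variable G : group.
Implicit Types x y z : G.

Lemma mul_Vr x : x ** ginv x = gone.
Proof.
  transitivity (ginv (ginv x) ** (ginv x ** (x ** ginv x))).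
  - rewrite gmul_assoc, gmul_Vl, gmul_1l. reflexivity.
  - rewrite (gmul_assoc _ (ginv x)), gmul_Vl, gmul_1l. apply gmul_Vl.
Qed.

Lemma mul_1r x : x ** gone = x.
Proof. rewrite <- (gmul_Vl G x), gmul_assoc, mul_Vr. apply gmul_1l. Qed.

Lemma mul_KV x y : ginv x ** (x ** y) = y.
Proof. rewrite gmul_assoc, gmul_Vl; apply gmul_1l. Qed.

Lemma mul_VK x y : x ** (ginv x ** y) = y.
Proof. rewrite gmul_assoc, mul_Vr; apply gmul_1l. Qed.

Lemma mul_cancel_l x y z : x ** y = x ** z -> y = z.
Proof. intros H. rewrite <- (mul_KV x y), H. apply mul_KV. Qed.

Lemma inv_uniq x y : x ** y = gone -> y = ginv x.
Proof. intros H. apply (mul_cancel_l x). rewrite H, mul_Vr. reflexivity. Qed.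

Lemma inv_inv x : ginv (ginv x) = x.
Proof. symmetry. apply inv_uniq. apply gmul_Vl. Qed.

Lemma inv_mul x y : ginv (x ** y) = ginv y ** ginv x.
Proof.
  symmetry. apply inv_uniq.
  rewrite <- gmul_assoc, (gmul_assoc _ y), mul_Vr, gmul_1l. apply mul_Vr.
Qed.

Lemma inv_one : ginv (@gone G) = gone.
Proof. symmetry. apply inv_uniq. apply gmul_1l. Qed.

Lemma gpow_1 x : gpow G x 1 = x.
Proof. apply mul_1r. Qed.

Lemma gpow_conj b x n :
  gpow G (b ** (x ** ginv b)) n = b ** (gpow G x n ** ginv b).
Proof.
  induction n as [|n IH]; simpl.
  - rewrite gmul_1l. symmetry; apply mul_Vr.
  - rewrite IH, <- !gmul_assoc, (gmul_assoc _ (ginv b)), gmul_Vl, gmul_1l.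
    reflexivity.
Qed.

Section Normal.
Variable N : G -> Prop.
Hypothesis HN : normal_subgroup G N.

Lemma normal_one : N gone.
Proof. apply HN. Qed.
Lemma normal_mul x y : N x -> N y -> N (x ** y).
Proof. apply HN. Qed.
Lemma normal_inv x : N x -> N (ginv x).
Proof. apply HN. Qed.
Lemma normal_conj x g : N x -> N (ginv g ** (x ** g)).
Proof. apply HN. Qed.
Lemma normal_conj' x g : N x -> N (g ** (x ** ginv g)).
Proof. intros Hx. rewrite <- (inv_inv g) at 1. apply normal_conj; auto. Qed.
End Normal.

Lemma trivial_normal : normal_subgroup G (fun x => x = gone).
Proof.
  repeat split; intros; subst.
  - apply gmul_1l.
  - apply inv_one.
  - rewrite gmul_1l. apply gmul_Vl.
Qed.

Lemma ncl_normal S : normal_subgroup G (normal_closure G S).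
Proof.
  repeat split; unfold normal_closure; intros.
  - apply normal_one; auto.
  - apply normal_mul; [auto | apply H | apply H0]; auto.
  - apply normal_inv; [auto | apply H]; auto.
  - apply normal_conj; [auto | apply H]; auto.
Qed.

Lemma ncl_in (S : G -> Prop) x : S x -> normal_closure G S x.
Proof. intros Hx N _ H. auto. Qed.

Lemma ncl_min (S N : G -> Prop) : normal_subgroup G N ->
  (forall x, S x -> N x) -> forall x, normal_closure G S x -> N x.
Proof. intros HN HS x Hx. apply Hx; auto. Qed.

Lemma ncl_mono (S T : G -> Prop) : (forall x, S x -> T x) ->
  forall x, normal_closure G S x -> normal_closure G T x.
Proof. intros H. apply ncl_min; [apply ncl_normal | intros; apply ncl_in; auto]. Qed.

End GroupFacts.

Arguments mul_Vr {G}. Arguments mul_1r {G}. Arguments mul_KV {G}.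
Arguments mul_VK {G}. Arguments inv_inv {G}. Arguments inv_mul {G}.
Arguments inv_one {G}. Arguments gpow_1 {G}. Arguments gpow_conj {G}.
Arguments normal_one {G N}. Arguments normal_mul {G N}.
Arguments normal_inv {G N}. Arguments normal_conj {G N}.
Arguments normal_conj' {G N}.

Section HomFacts.
Variables (G H : group) (f : hom G H).

Lemma hom_one : f gone = gone.
Proof.
  apply (mul_cancel_l _ (f gone)). rewrite <- hom_mul, gmul_1l, mul_1r.
  reflexivity.
Qed.

Lemma hom_inv x : f (ginv x) = ginv (f x).
Proof. apply inv_uniq. rewrite <- hom_mul, mul_Vr. apply hom_one. Qed.

Lemma hom_pow x n : f (gpow G x n) = gpow H (f x) n.
Proof. induction n; simpl; [apply hom_one | rewrite hom_mul, IHn; reflexivity]. Qed.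

Lemma preimage_normal (N : H -> Prop) : normal_subgroup H N ->
  normal_subgroup G (fun x => N (f x)).
Proof.
  intros HN. repeat split; intros.
  - rewrite hom_one. apply (normal_one HN).
  - rewrite hom_mul. apply (normal_mul HN); auto.
  - rewrite hom_inv. apply (normal_inv HN); auto.
  - rewrite !hom_mul, hom_inv. apply (normal_conj HN); auto.
Qed.

Lemma hom_ncl (S : G -> Prop) (T : H -> Prop) : (forall x, S x -> T (f x)) ->
  forall x, normal_closure G S x -> normal_closure H T (f x).
Proof.
  intros HS. apply (ncl_min G S (fun x => normal_closure H T (f x))).
  - apply preimage_normal, ncl_normal.
  - intros; apply ncl_in; auto.
Qed.
End HomFacts.

Lemma sig_eq {T : Type} (P : T -> Prop) (x y : {t | P t}) :
  proj1_sig x = proj1_sig y -> x = y.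
Proof. destruct x, y; simpl; intros; subst; f_equal; apply proof_irrelevance. Qed.

Definition subgroup (G : group) (S : G -> Prop) (S1 : S gone)
  (Smul : forall x y, S x -> S y -> S (x ** y))
  (Sinv : forall x, S x -> S (ginv x)) : group.
Proof.
  refine (Group {x | S x}
    (fun x y => exist _ (proj1_sig x ** proj1_sig y) (Smul _ _ (proj2_sig x) (proj2_sig y)))
    (exist _ gone S1) (fun x => exist _ (ginv (proj1_sig x)) (Sinv _ (proj2_sig x)))
    _ _ _); intros; apply sig_eq; simpl.
  - apply gmul_assoc.
  - apply gmul_1l.
  - apply gmul_Vl.
Defined.

Definition hom_id (G : group) : hom G G := Hom G G (fun x => x) (fun x y => eq_refl).

Definition hom_comp (G H K : group) (g : hom H K) (f : hom G H) : hom G K.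
Proof. refine (Hom G K (fun x => g (f x)) _). intros; rewrite !hom_mul; reflexivity. Defined.

Definition perm (T : Type) :=
  {f : T -> T | exists g, (forall x, f (g x) = x) /\ (forall x, g (f x) = x)}.

Definition perm_inv {T} (f : perm T) : perm T.
Proof.
  destruct (constructive_indefinite_description _ (proj2_sig f)) as [g [Hg1 Hg2]].
  exists g. exists (proj1_sig f). split; assumption.
Defined.

Lemma perm_inv_spec {T} (f : perm T) x : proj1_sig (perm_inv f) (proj1_sig f x) = x.
Proof.
  unfold perm_inv.
  destruct (constructive_indefinite_description _ (proj2_sig f)) as [g [Hg1 Hg2]].
  apply Hg2.
Qed.

Definition perm_mul {T} (f g : perm T) : perm T.
Proof.
  exists (fun x => proj1_sig f (proj1_sig g x)).
  destruct f as [f [f' [Hf1 Hf2]]], g as [g [g' [Hg1 Hg2]]]. simpl.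
  exists (fun x => g' (f' x)). split; intros; congruence.
Defined.

Definition perm_one {T} : perm T.
Proof. exists (fun x => x). exists (fun x => x); split; reflexivity. Defined.

Definition Sym (T : Type) : group.
Proof.
  refine (Group (perm T) perm_mul perm_one perm_inv _ _ _);
    intros; apply sig_eq; try reflexivity.
  apply functional_extensionality; intros; apply perm_inv_spec.
Defined.

Section FreeProductBasics.
Variables (I : Type) (A : I -> group) (G : group) (iota : forall i, hom (A i) G).
Hypothesis Hfp : is_free_product I A G iota.

(** A free product is generated by the images of its factors: the subgroup
    they generate receives a map from [G] splitting its inclusion, by
    uniqueness in the universal property. *)
Lemma free_product_ind (S : G -> Prop) : S gone ->
  (forall x y, S x -> S y -> S (x ** y)) -> (forall x, S x -> S (ginv x)) ->
  (forall i a, S (iota i a)) -> forall g, S g.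
Proof.
  intros S1 Smul Sinv Siota g.
  set (H := subgroup G S S1 Smul Sinv).
  assert (Hm : forall i (x y : A i), exist S (iota i (x ** y)) (Siota i (x ** y)) =
      @gmul H (exist S (iota i x) (Siota i x)) (exist S (iota i y) (Siota i y))).
  { intros; apply sig_eq; simpl; apply hom_mul. }
  pose (f := fun i => Hom (A i) H (fun a => exist S (iota i a) (Siota i a)) (Hm i)).
  destruct (Hfp H f) as [theta [Htheta _]].
  set (incl := Hom H G (fun x => proj1_sig x) (fun x y => eq_refl)).
  destruct (Hfp G iota) as [phi0 [_ Huniq]].
  assert (E1 := Huniq (hom_id G) (fun i x => eq_refl) g).
  assert (E2 := Huniq (hom_comp _ _ _ incl theta)
    (fun i x => f_equal (@proj1_sig _ _) (Htheta i x)) g).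
  simpl in E1, E2. rewrite E1, <- E2. exact (proj2_sig (theta g)).
Qed.

Definition select_hom i j : hom (A j) (A i).
Proof.
  refine (Hom (A j) (A i)
    (fun x => match excluded_middle_informative (j = i) with
              | left e => eq_rect j A x i e
              | right _ => gone
              end) _).
  intros x y. destruct excluded_middle_informative as [e|n].
  - subst. reflexivity.
  - symmetry; apply gmul_1l.
Defined.

Lemma factor_retract i : exists r : hom G (A i), forall x, r (iota i x) = x.
Proof.
  destruct (Hfp (A i) (select_hom i)) as [r [Hr _]]. exists r. intros x.
  rewrite Hr. simpl. destruct excluded_middle_informative as [e|n].
  - rewrite <- eq_rect_eq. reflexivity.
  - exfalso; auto.
Qed.
End FreeProductBasics.

(** * Reduced words over the quotients A_i / K_i *)

(** Given normal subgroups [K i] of a family [A i], a reduced word is a list of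
    letters [(i, a)] where [a] is the chosen representative of a nontrivial
    coset of [K i] and consecutive letters lie in different factors.  Each
    [A i] acts on reduced words by left multiplication (van der Waerden's
    construction). *)
Section Words.
Variables (I : Type) (A : I -> group) (K : forall i, A i -> Prop).
Hypothesis HK : forall i, normal_subgroup (A i) (K i).

Definition eqv i (x y : A i) : Prop := K i (ginv x ** y).

Lemma eqv_refl i x : eqv i x x.
Proof. unfold eqv; rewrite gmul_Vl. apply (normal_one (HK i)). Qed.

Lemma eqv_sym i x y : eqv i x y -> eqv i y x.
Proof.
  unfold eqv; intros H. apply (normal_inv (HK i)) in H.
  rewrite inv_mul, inv_inv in H. exact H.
Qed.

Lemma eqv_trans i x y z : eqv i x y -> eqv i y z -> eqv i x z.
Proof.
  unfold eqv; intros H1 H2. assert (H := normal_mul (HK i) _ _ H1 H2).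
  rewrite <- gmul_assoc, mul_VK in H. exact H.
Qed.

Lemma eqv_mul_l i a x y : eqv i x y -> eqv i (a ** x) (a ** y).
Proof. unfold eqv. rewrite inv_mul, <- gmul_assoc, mul_KV. auto. Qed.

Lemma eqv_K i x y : eqv i x y -> K i x -> K i y.
Proof. unfold eqv; intros H Hx. rewrite <- (mul_VK x y). apply (normal_mul (HK i)); auto. Qed.

Lemma eqv_mulK i a k : K i k -> eqv i (a ** k) a.
Proof.
  intros Hk. unfold eqv. rewrite inv_mul, <- gmul_assoc, gmul_Vl, mul_1r.
  apply (normal_inv (HK i)); auto.
Qed.

Lemma eqv_Kmul i a k : K i k -> eqv i (k ** a) a.
Proof.
  intros Hk. unfold eqv. rewrite inv_mul, <- gmul_assoc.
  apply (normal_conj (HK i)), (normal_inv (HK i)); auto.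
Qed.

Definition rep i (a : A i) : A i := epsilon (inhabits gone) (fun x => eqv i x a).

Lemma rep_eqv i a : eqv i (rep i a) a.
Proof.
  apply (epsilon_spec (inhabits gone) (fun x => eqv i x a)).
  exists a; apply eqv_refl.
Qed.

Lemma rep_compat i a b : eqv i a b -> rep i a = rep i b.
Proof.
  intros H. unfold rep. f_equal. apply functional_extensionality; intros x.
  apply propositional_extensionality; split; intros.
  - eapply eqv_trans; eauto.
  - eapply eqv_trans; eauto. apply eqv_sym; auto.
Qed.

Lemma rep_rep i a : rep i (rep i a) = rep i a.
Proof. apply rep_compat, rep_eqv. Qed.

Definition letter := {i : I & A i}.
Definition word := list letter.
Definition idx (l : letter) : I := projT1 l.

Definition get i (l : letter) : option (A i) :=
  match excluded_middle_informative (projT1 l = i) with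
  | left e => Some (eq_rect _ A (projT2 l) _ e)
  | right _ => None
  end.

Lemma get_same i a : get i (existT _ i a) = Some a.
Proof.
  unfold get. destruct excluded_middle_informative as [e|n]; simpl in *.
  - rewrite <- eq_rect_eq. reflexivity.
  - exfalso; auto.
Qed.

Lemma get_diff i l : idx l <> i -> get i l = None.
Proof. unfold get, idx. destruct excluded_middle_informative; auto. contradiction. Qed.

Definition canon (l : letter) : Prop := rep _ (projT2 l) = projT2 l /\ ~ K _ (projT2 l).

Definition headok (i : I) (v : word) : Prop :=
  match v with [] => True | l :: _ => idx l <> i end.

Fixpoint reduced (w : word) : Prop :=
  match w with
  | [] => True
  | l :: w' => canon l /\ reduced w' /\ headok (idx l) w'
  end.

Definition cons_letter i (c : A i) (v : word) : word :=
  if excluded_middle_informative (K i c) then v else existT _ i (rep i c) :: v.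

Definition mul_letter i (a : A i) (v : word) : word :=
  match v with
  | [] => cons_letter i a []
  | l :: v' =>
      match get i l with
      | Some c => cons_letter i (a ** c) v'
      | None => cons_letter i a v
      end
  end.

(** The same operation, extended by the identity to non-reduced words so that
    it becomes a permutation of all words. *)
Definition letter_act i (a : A i) (v : word) : word :=
  if excluded_middle_informative (reduced v) then mul_letter i a v else v.

Lemma cons_letter_compat i c c' v : eqv i c c' -> cons_letter i c v = cons_letter i c' v.
Proof.
  intros H. unfold cons_letter.
  destruct excluded_middle_informative as [h1|h1];
    destruct excluded_middle_informative as [h2|h2]; auto.
  - exfalso; apply h2; eapply eqv_K; eauto.
  - exfalso; apply h1; eapply eqv_K; eauto. apply eqv_sym; auto.
  - rewrite (rep_compat _ _ _ H). reflexivity.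
Qed.

Lemma cons_letter_reduced i c v :
  reduced v -> headok i v -> reduced (cons_letter i c v).
Proof.
  intros Hv Hh. unfold cons_letter. destruct excluded_middle_informative as [h|h]; auto.
  repeat split; auto; simpl.
  - apply rep_rep.
  - intros Hk. apply h. eapply eqv_K; eauto. apply rep_eqv.
Qed.

Lemma cons_letter_length i c v : length (cons_letter i c v) <= S (length v).
Proof. unfold cons_letter. destruct excluded_middle_informative; simpl; lia. Qed.

Lemma decomp i v : reduced v -> exists c v',
  reduced v' /\ headok i v' /\ cons_letter i c v' = v /\
  forall x, mul_letter i x v = cons_letter i (x ** c) v'.
Proof.
  intros Hv. assert (Hone : forall v, cons_letter i gone v = v).
  { intros u. unfold cons_letter. destruct excluded_middle_informative as [h|h]; auto.
    exfalso; apply h, (normal_one (HK i)). }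
  destruct v as [|l v'].
  - exists gone, []. split; [|split; [|split]]; auto.
    intros x. rewrite mul_1r. reflexivity.
  - destruct (excluded_middle_informative (idx l = i)) as [e|n].
    + destruct l as [j b]. unfold idx in e; simpl in e. subst j.
      destruct Hv as [[Hr Hk] [Hv' Hh]]; simpl in Hr, Hk.
      exists b, v'. split; [|split; [|split]]; auto.
      * unfold cons_letter. destruct excluded_middle_informative; [contradiction|].
        rewrite Hr. reflexivity.
      * intros x. simpl. rewrite get_same. reflexivity.
    + exists gone, (l :: v'). split; [|split; [|split]]; auto.
      intros x. simpl. rewrite get_diff by auto. rewrite mul_1r. reflexivity.
Qed.

Lemma mul_letter_reduced i a v : reduced v -> reduced (mul_letter i a v).
Proof.
  intros Hv. destruct (decomp i v Hv) as (c & v' & Hr & Hh & _ & He).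
  rewrite He. apply cons_letter_reduced; auto.
Qed.

Lemma mul_letter_cons i a c v' : reduced v' -> headok i v' ->
  mul_letter i a (cons_letter i c v') = cons_letter i (a ** c) v'.
Proof.
  intros Hr Hh. unfold cons_letter at 1. destruct excluded_middle_informative as [h|h].
  - replace (mul_letter i a v') with (cons_letter i a v').
    + apply cons_letter_compat, eqv_sym, eqv_mulK; auto.
    + destruct v' as [|l v'']; simpl; auto. simpl in Hh. rewrite get_diff; auto.
  - simpl. rewrite get_same. apply cons_letter_compat, eqv_mul_l, rep_eqv.
Qed.

Lemma mul_letter_mul i a b v : reduced v ->
  mul_letter i a (mul_letter i b v) = mul_letter i (a ** b) v.
Proof.
  intros Hv. destruct (decomp i v Hv) as (c & v' & Hr & Hh & _ & He).
  rewrite !He, mul_letter_cons, gmul_assoc; auto.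
Qed.

Lemma mul_letter_one i v : reduced v -> mul_letter i gone v = v.
Proof.
  intros Hv. destruct (decomp i v Hv) as (c & v' & Hr & Hh & Hm & He).
  rewrite He, gmul_1l. exact Hm.
Qed.

Lemma mul_letter_K i k v : reduced v -> K i k -> mul_letter i k v = v.
Proof.
  intros Hv Hk. destruct (decomp i v Hv) as (c & v' & Hr & Hh & Hm & He).
  rewrite He, <- Hm. apply cons_letter_compat, eqv_Kmul; auto.
Qed.

Lemma letter_act_mul i a b v :
  letter_act i a (letter_act i b v) = letter_act i (a ** b) v.
Proof.
  unfold letter_act. destruct (excluded_middle_informative (reduced v)) as [h|h].
  - destruct excluded_middle_informative as [h'|h'].
    + apply mul_letter_mul; auto.
    + exfalso; apply h', mul_letter_reduced; auto.
  - destruct excluded_middle_informative; [contradiction|auto].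
Qed.

Lemma letter_act_one i v : letter_act i gone v = v.
Proof. unfold letter_act. destruct excluded_middle_informative; auto. apply mul_letter_one; auto. Qed.

Lemma letter_act_K i k v : K i k -> letter_act i k v = v.
Proof. unfold letter_act. destruct excluded_middle_informative; auto. intros; apply mul_letter_K; auto. Qed.

Definition letter_perm i (a : A i) : perm word.
Proof.
  exists (letter_act i a). exists (letter_act i (ginv a)). split; intros x.
  - rewrite letter_act_mul, mul_Vr. apply letter_act_one.
  - rewrite letter_act_mul, gmul_Vl. apply letter_act_one.
Defined.

Definition letter_act_hom i : hom (A i) (Sym word).
Proof.
  refine (Hom (A i) (Sym word) (letter_perm i) _).
  intros x y. apply sig_eq. simpl. apply functional_extensionality; intros v.
  symmetry; apply letter_act_mul.
Defined.

Lemma reduced_app u l v : reduced u -> reduced (l :: v) ->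
  idx l <> idx (last u l) -> reduced (u ++ l :: v).
Proof.
  induction u as [|x u IH]; simpl; auto. intros (H1 & H2 & H3) Hlv Hh.
  split; [|split]; auto; destruct u; simpl in *; auto.
Qed.

Lemma reduced_app_l u v : reduced (u ++ v) -> reduced u.
Proof.
  induction u as [|l u IH]; simpl; auto. intros (H1 & H2 & H3).
  split; [|split]; auto. destruct u; simpl in *; auto.
Qed.

End Words.

(** * Torsion modulo the normal closure of the [K i] in a free product *)

Section NormalForm.
Variables (I : Type) (A : I -> group) (G : group) (iota : forall i, hom (A i) G).
Hypothesis Hfp : is_free_product I A G iota.
Variable K : forall i, A i -> Prop.
Hypothesis HK : forall i, normal_subgroup (A i) (K i).

Variable phi : hom G (Sym (word I A)).
Hypothesis Hphi : forall i x, phi (iota i x) = letter_act_hom I A K HK i x.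

Local Notation word := (word I A).
Local Notation reduced := (reduced I A K).
Local Notation idx := (idx I A).

Definition act (g : G) : word -> word := proj1_sig (phi g).

Lemma act_mul g h v : act (g ** h) v = act g (act h v).
Proof. unfold act. rewrite hom_mul. reflexivity. Qed.

Lemma act_iota i a v : act (iota i a) v = letter_act I A K i a v.
Proof. unfold act. rewrite Hphi. reflexivity. Qed.

Lemma act_one v : act gone v = v.
Proof. unfold act. rewrite hom_one. reflexivity. Qed.

Definition K_image (x : G) : Prop := exists i a, K i a /\ x = iota i a.
Definition root_image (x : G) : Prop :=
  exists i a, (exists m, 0 < m /\ K i (gpow (A i) a m)) /\ x = iota i a.
Definition N_K : G -> Prop := normal_closure G K_image.
Definition N_root : G -> Prop := normal_closure G root_image.

Lemma N_K_sub_N_root x : N_K x -> N_root x.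
Proof.
  apply ncl_mono. intros y (i & a & Ha & ->). exists i, a. split; auto.
  exists 1. rewrite gpow_1. auto.
Qed.

Lemma act_N_K n : N_K n -> forall v, act n v = v.
Proof.
  intros Hn. assert (H : phi n = gone).
  { apply (ncl_min G K_image (fun x => phi x = gone)); auto.
    - apply (preimage_normal G _ phi (fun y => y = gone)), trivial_normal.
    - intros x (i & a & Ha & ->). rewrite Hphi. apply sig_eq. simpl.
      apply functional_extensionality; intros v. apply letter_act_K; auto. }
  intros v. unfold act. rewrite H. reflexivity.
Qed.

Definition cong (x y : G) := exists n, N_K n /\ x = y ** n.

Lemma cong_refl x : cong x x.
Proof. exists gone. split; [apply normal_one, ncl_normal | symmetry; apply mul_1r]. Qed.

Lemma cong_sym x y : cong x y -> cong y x.
Proof.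
  intros (n & Hn & ->). exists (ginv n). split.
  - apply (normal_inv (ncl_normal _ _)); auto.
  - rewrite <- gmul_assoc, mul_Vr, mul_1r. reflexivity.
Qed.

Lemma cong_trans x y z : cong x y -> cong y z -> cong x z.
Proof.
  intros (n & Hn & ->) (m & Hm & ->). exists (m ** n). split.
  - apply (normal_mul (ncl_normal _ _)); auto.
  - symmetry; apply gmul_assoc.
Qed.

Lemma cong_mul_l z x y : cong x y -> cong (z ** x) (z ** y).
Proof. intros (n & Hn & ->). exists n. split; auto. apply gmul_assoc. Qed.

Lemma cong_mul_r z x y : cong x y -> cong (x ** z) (y ** z).
Proof.
  intros (n & Hn & ->). exists (ginv z ** (n ** z)). split.
  - apply (normal_conj (ncl_normal _ _)); auto.
  - rewrite <- !gmul_assoc, mul_VK. reflexivity.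
Qed.

Lemma cong_pow x y n : cong x y -> cong (gpow G x n) (gpow G y n).
Proof.
  intros H; induction n as [|n IH]; simpl; [apply cong_refl|].
  eapply cong_trans; [apply cong_mul_r, H | apply cong_mul_l, IH].
Qed.

Lemma cong_act x y : cong x y -> forall v, act x v = act y v.
Proof. intros (n & Hn & ->) v. rewrite act_mul, (act_N_K n Hn). reflexivity. Qed.

Fixpoint eval (w : word) : G :=
  match w with [] => gone | l :: w' => iota (projT1 l) (projT2 l) ** eval w' end.

Lemma eval_app u v : eval (u ++ v) = eval u ** eval v.
Proof.
  induction u as [|l u IH]; simpl; [rewrite gmul_1l | rewrite IH, gmul_assoc]; reflexivity.
Qed.

Lemma eval_cons_letter i c v :
  cong (eval (cons_letter I A K i c v)) (iota i c ** eval v).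
Proof.
  unfold cons_letter. destruct excluded_middle_informative as [h|h].
  - exists (ginv (eval v) ** (ginv (iota i c) ** eval v)). split.
    + apply (normal_conj (ncl_normal _ _)), (normal_inv (ncl_normal _ _)), ncl_in.
      exists i, c; auto.
    + rewrite <- gmul_assoc, !mul_VK. reflexivity.
  - apply cong_mul_r. exists (iota i (ginv c ** rep I A K i c)). split.
    + apply ncl_in. exists i, (ginv c ** rep I A K i c). split; auto.
      apply eqv_sym, rep_eqv; exact HK.
    + rewrite <- hom_mul, mul_VK. reflexivity.
Qed.

Lemma eval_mul_letter i a v : reduced v ->
  cong (eval (mul_letter I A K i a v)) (iota i a ** eval v).
Proof.
  intros Hv. destruct (decomp I A K HK i v Hv) as (c & v' & Hr & Hh & Hm & He).
  rewrite He. eapply cong_trans; [apply eval_cons_letter|].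
  rewrite hom_mul, <- gmul_assoc. apply cong_mul_l. rewrite <- Hm.
  apply cong_sym, eval_cons_letter.
Qed.

(** Every [g] maps reduced words to reduced words, and acts on them as left
    multiplication up to [N_K]; it suffices to check this on generators. *)
Definition act_tracks (g : G) := forall v, reduced v ->
  reduced (act g v) /\ cong (eval (act g v)) (g ** eval v).

Lemma act_tracks_all g : act_tracks g.
Proof.
  assert (Hmul : forall g h, act_tracks g -> act_tracks h -> act_tracks (g ** h)).
  { intros x y Hx Hy v Hv. rewrite act_mul.
    destruct (Hy v Hv) as [H1 H2]. destruct (Hx _ H1) as [H3 H4]. split; auto.
    eapply cong_trans; [apply H4|]. rewrite <- gmul_assoc. apply cong_mul_l; auto. }
  assert (Hiota : forall i a, act_tracks (iota i a)).
  { intros i a v Hv. rewrite act_iota. unfold letter_act.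
    destruct excluded_middle_informative; [|contradiction].
    split; [apply mul_letter_reduced | apply eval_mul_letter]; auto. }
  assert (H : forall g, act_tracks g /\ act_tracks (ginv g)).
  { apply (free_product_ind I A G iota Hfp).
    - assert (H1 : act_tracks gone).
      { intros v Hv. rewrite act_one, gmul_1l. split; auto. apply cong_refl. }
      rewrite inv_one. auto.
    - intros x y [H1 H2] [H3 H4]. rewrite inv_mul. auto.
    - intros x [H1 H2]. rewrite inv_inv. auto.
    - intros i a. rewrite <- hom_inv. auto. }
  apply H.
Qed.

(** The normal form of [g]: a reduced word spelling [g] modulo [N_K]. *)
Definition nf g := act g [].

Lemma nf_reduced g : reduced (nf g).
Proof. apply (act_tracks_all g); exact Logic.I. Qed.

Lemma nf_cong g : cong g (eval (nf g)).
Proof.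
  destruct (act_tracks_all g [] Logic.I) as [_ H]. simpl in H.
  rewrite mul_1r in H. apply cong_sym; auto.
Qed.

Lemma act_eval w v : reduced (w ++ v) -> act (eval w) v = w ++ v.
Proof.
  induction w as [|[i a] w IH]; simpl; intros Hr; [apply act_one|].
  destruct Hr as ([Hrep Hk] & Hr & Hh); simpl in Hrep, Hk.
  rewrite act_mul, IH, act_iota by auto. unfold letter_act.
  destruct excluded_middle_informative; [|contradiction].
  assert (E : mul_letter I A K i a (w ++ v) = cons_letter I A K i a (w ++ v)).
  { destruct (w ++ v) as [|l u]; simpl; auto. simpl in Hh. rewrite get_diff; auto. }
  rewrite E. unfold cons_letter. destruct excluded_middle_informative; [contradiction|].
  rewrite Hrep. reflexivity.
Qed.

Lemma nf_single_root g i a m : nf g = [existT _ i a] -> 0 < m ->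
  N_K (gpow G g m) -> N_root g.
Proof.
  intros Hw Hm HN. assert (Hc := nf_cong g). rewrite Hw in Hc. simpl in Hc.
  rewrite mul_1r in Hc.
  assert (Hka : K i (gpow (A i) a m)).
  { assert (E := cong_act _ _ (cong_pow _ _ m Hc) []).
    rewrite (act_N_K _ HN), <- hom_pow, act_iota in E. unfold letter_act in E.
    destruct excluded_middle_informative as [_|h]; [|exfalso; exact (h Logic.I)].
    simpl in E. unfold cons_letter in E.
    destruct excluded_middle_informative as [Hk|]; [exact Hk | discriminate]. }
  destruct Hc as (n & Hn & ->). apply (normal_mul (ncl_normal _ _)).
  - apply ncl_in. exists i, a. eauto.
  - apply N_K_sub_N_root; auto.
Qed.

Lemma nf_conj_shorter g i a b u : nf g = existT _ i a :: u ++ [existT _ i b] ->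
  length (nf (iota i b ** (g ** ginv (iota i b)))) < length (nf g).
Proof.
  intros Hw. set (p := existT _ i a :: u).
  change (nf g = p ++ [existT _ i b]) in Hw.
  assert (Hp : reduced p).
  { assert (H := nf_reduced g). rewrite Hw in H. exact (reduced_app_l I A K p _ H). }
  assert (Hc : cong (iota i b ** (g ** ginv (iota i b))) (iota i b ** eval p)).
  { apply cong_mul_l. assert (H := nf_cong g).
    rewrite Hw, eval_app in H. simpl in H. rewrite mul_1r in H.
    eapply cong_trans; [apply cong_mul_r, H|].
    rewrite <- gmul_assoc, mul_Vr, mul_1r. apply cong_refl. }
  unfold nf at 1. rewrite (cong_act _ _ Hc), act_mul.
  rewrite (act_eval p []) by (rewrite app_nil_r; exact Hp).
  rewrite app_nil_r, act_iota. unfold letter_act.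
  destruct excluded_middle_informative; [|contradiction].
  unfold p; simpl. rewrite get_same.
  eapply Nat.le_lt_trans; [apply cons_letter_length|].
  rewrite Hw, length_app. unfold p; simpl.
  rewrite Nat.add_1_r. apply Nat.lt_succ_diag_r.
Qed.

Lemma reduced_repeat l w : reduced (l :: w) -> idx l <> idx (last (l :: w) l) ->
  forall k, reduced (concat (repeat (l :: w) k)).
Proof.
  intros Hw Hne k. induction k as [|[|k] IH]; simpl; auto.
  - rewrite app_nil_r. exact Hw.
  - apply (reduced_app I A K (l :: w) l (w ++ concat (repeat (l :: w) k))); auto.
Qed.

Lemma act_power_cyclic g l u y : nf g = l :: u ++ [y] -> idx l <> idx y ->
  forall k, act (gpow G g k) [] = concat (repeat (l :: u ++ [y]) k).
Proof.
  intros Hw Hne k. induction k as [|k IH]; simpl; [apply act_one|].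
  rewrite act_mul, IH, (cong_act _ _ (nf_cong g)), Hw.
  apply act_eval. refine (reduced_repeat l (u ++ [y]) _ _ (S k)).
  - rewrite <- Hw. apply nf_reduced.
  - rewrite app_comm_cons, last_last. exact Hne.
Qed.

Lemma root_closure_of_power g m : 0 < m -> N_K (gpow G g m) -> N_root g.
Proof.
  remember (length (nf g)) as n eqn:Hn. revert g m Hn.
  induction n as [n IH] using lt_wf_ind. intros g m Hn Hm HN.
  destruct (nf g) as [|l1 [|l2 rest]] eqn:Hw.
  - apply N_K_sub_N_root. destruct (nf_cong g) as (k & Hk & Eg).
    rewrite Hw in Eg. simpl in Eg. rewrite Eg, gmul_1l. exact Hk.
  - destruct l1 as [i a]. exact (nf_single_root g i a m Hw Hm HN).
  - destruct (exists_last (l := l2 :: rest) ltac:(discriminate)) as [u [y Huy]].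
    rewrite Huy in Hw, Hn.
    destruct (excluded_middle_informative (idx l1 = idx y)) as [Heq|Hne].
    + destruct l1 as [i a], y as [j b]. unfold idx in Heq; simpl in Heq; subst j.
      set (g' := iota i b ** (g ** ginv (iota i b))).
      assert (Hg' : N_root g').
      { apply (IH (length (nf g'))) with (m := m); auto.
        - rewrite Hn, <- Hw. exact (nf_conj_shorter g i a b u Hw).
        - unfold g'. rewrite gpow_conj. apply (normal_conj' (ncl_normal _ _)); auto. }
      assert (Eg : g = ginv (iota i b) ** (g' ** iota i b)).
      { unfold g'. rewrite <- (gmul_assoc _ (iota i b)), mul_KV, <- gmul_assoc,
          gmul_Vl, mul_1r. reflexivity. }
      rewrite Eg. apply (normal_conj (ncl_normal _ _)). exact Hg'.
    + exfalso. assert (E := act_power_cyclic g l1 u y Hw Hne m).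
      rewrite (act_N_K _ HN) in E. destruct m; [lia | discriminate E].
Qed.

End NormalForm.

Lemma Tor_normal (G : group) n : normal_subgroup G (Tor G n).
Proof. destruct n; simpl; [apply trivial_normal | apply ncl_normal]. Qed.

Lemma Tor_S (G : group) n x : Tor G n x -> Tor G (S n) x.
Proof. intros H. apply ncl_in. exists 1. rewrite gpow_1. auto. Qed.

Lemma Tor_le (G : group) n m x : n <= m -> Tor G n x -> Tor G m x.
Proof. induction 1; auto using Tor_S. Qed.

Lemma Tor_step_mono (G : group) n m : (forall x, Tor G n x -> Tor G m x) ->
  forall x, Tor G (S n) x -> Tor G (S m) x.
Proof. intros H. simpl. apply ncl_mono. intros x (k & Hk & Hx). exists k; auto. Qed.

Lemma hom_Tor (G H : group) (f : hom G H) n x : Tor G n x -> Tor H n (f x).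
Proof.
  revert x; induction n as [|n IH]; simpl; intros x Hx.
  - subst. apply hom_one.
  - revert Hx. apply hom_ncl. intros y (k & Hk & Hy). exists k.
    rewrite <- hom_pow. auto.
Qed.

Lemma stable_of_step (G : group) n :
  (forall x, Tor G (S n) x -> Tor G n x) -> Tor_stable G n.
Proof.
  intros H. assert (Hj : forall j x, Tor G (n + j) x -> Tor G n x).
  { induction j as [|j IH]; intros x Hx.
    - rewrite Nat.add_0_r in Hx; auto.
    - rewrite Nat.add_succ_r in Hx. apply H. eapply Tor_step_mono; eauto. }
  intros x; split; [intros; exists n; auto|].
  intros [k Hk]. apply (Hj k). apply (Tor_le G k); auto. lia.
Qed.

Lemma stable_up (G : group) n m : Tor_stable G n -> n <= m -> Tor_stable G m.
Proof.
  intros H Hle x. split; [intros; exists m; auto|].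
  intros Hx. apply (Tor_le G n m); auto. apply H; auto.
Qed.

Lemma TorLen_correct (G : group) : TorLen_spec G (TorLen G).
Proof.
  unfold TorLen. apply epsilon_spec.
  destruct (classic (exists n, Tor_stable G n)) as [Hex|Hno].
  - destruct (dec_inh_nat_subset_has_unique_least_element _ (fun n => classic _) Hex)
      as [n [[Hn Hmin] _]].
    exists (Some n). split; auto.
  - exists None. intros n Hn; eauto.
Qed.

Lemma TorLen_le_iff (G : group) n : le_natinf (TorLen G) (Some n) <-> Tor_stable G n.
Proof.
  assert (H := TorLen_correct G). destruct (TorLen G) as [k|]; simpl.
  - destruct H as [Hk Hmin]. split; [apply stable_up; auto | apply Hmin].
  - split; [contradiction | intros Hn; exact (H n Hn)].
Qed.

(** * Torsion series of a free product *)

Section FreeProductTorsion.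
Variables (I : Type) (A : I -> group) (G : group) (iota : forall i, hom (A i) G).
Hypothesis Hfp : is_free_product I A G iota.

Lemma free_product_root (K : forall i, A i -> Prop)
  (HK : forall i, normal_subgroup (A i) (K i)) g m :
  0 < m -> N_K I A G iota K (gpow G g m) -> N_root I A G iota K g.
Proof.
  destruct (Hfp _ (letter_act_hom I A K HK)) as [phi [Hphi _]].
  apply (root_closure_of_power I A G iota Hfp K HK phi Hphi).
Qed.

Lemma Tor_free_product n x :
  Tor G n x -> N_K I A G iota (fun i => Tor (A i) n) x.
Proof.
  revert x; induction n as [|n IH]; intros x Hx.
  - simpl in Hx. subst. apply normal_one, ncl_normal.
  - revert x Hx. apply ncl_min; [apply ncl_normal|].
    intros g (m & Hm & Hg). apply IH in Hg.
    assert (H := free_product_root _ (fun i => Tor_normal (A i) n) g m Hm Hg).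
    clear Hg. revert g H. apply ncl_mono. intros y (i & a & Ha & ->). exists i, a.
    split; auto. apply ncl_in. exact Ha.
Qed.

Lemma stable_free_product s : (forall i, Tor_stable (A i) s) -> Tor_stable G s.
Proof.
  intros Hs. apply stable_of_step, ncl_min; [apply Tor_normal|].
  intros g (m & Hm & Hg). apply Tor_free_product in Hg.
  assert (H := free_product_root _ (fun i => Tor_normal (A i) s) g m Hm Hg).
  clear Hg. revert g H. apply ncl_min; [apply Tor_normal|].
  intros y (i & a & Ha & ->). apply hom_Tor, (Hs i).
  exists (S s). apply ncl_in. exact Ha.
Qed.

(** Stability passes from the free product to each factor, a retract of it. *)
Lemma stable_factor n i : Tor_stable G n -> Tor_stable (A i) n.
Proof.
  intros H x. split; [intros; exists n; auto|].
  intros [k Hk]. destruct (factor_retract I A G iota Hfp i) as [r Hr].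
  rewrite <- (Hr x). apply hom_Tor, H. exists k. apply hom_Tor; auto.
Qed.
End FreeProductTorsion.

Theorem corollary3p15 (I : Type) (A : I -> group) (G : group)
  (iota : forall i, hom (A i) G) :
  is_free_product I A G iota ->
  is_sup_natinf I (fun i => TorLen (A i)) (TorLen G).
Proof.
  intros Hfp. split.
  - intros i. destruct (TorLen G) as [n|] eqn:E;
      [| destruct (TorLen (A i)); exact Logic.I].
    apply TorLen_le_iff, (stable_factor I A G iota Hfp n i), TorLen_le_iff.
    rewrite E. apply le_n.
  - intros [s|] Hu; [| destruct (TorLen G); exact Logic.I].
    apply TorLen_le_iff, (stable_free_product I A G iota Hfp s).
    intros i. apply TorLen_le_iff, Hu.
Qed.
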